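(* For $k\ge 1$, rectangular reduction gives a bijection $\mathrm{red}:\mathcal M^{\circ}_{2k}\to\mathcal N_{k,0}\cup\mathcal N_{k,1}$. Consequently $M^\circ_{2k} = N_{k,0}+N_{k,1} = N_k - N_{k,2}$.
   Context: Colorings. Each square is colored water or land. Two distinct squares are adjacent if they share an edge after all edge identifications; a set of squares is connected if its induced adjacency graph is connected (empty set counts as connected). (N1): the water is connected. (N2$\circ$): no interior (non-boundary) vertex of the tiling has all of the squares incident to it water. A $2\times k$ Nurikabe rectangle is a coloring of the $2\times k$ grid (columns $1,\dots,k$ left to right, no identifications) with connected water and no $2\times 2$ block of water squares; $\mathcal N_k$ is the set of these, $N_k=|\mathcal N_k|$; $\mathcal N_{k,i}$ is the subset with exactly $i$ water squares in column $k$, $N_{k,i}=|\mathcal N_{k,i}|$. Tile $[0,n]\times[0,1]$ by unit squares $[j-1,j]\times[0,1]$, called square $j$. The $1\times n$ Möbius strip identifies $(x,1)\sim(n-x,0)$ for $x\in[0,n]$; its boundary is the image of the vertical sides. $\mathcal M^\circ_n$ is the set of colorings of the $1\times n$ Möbius strip satisfying (N1) and (N2$\circ$), $M^\circ_n=|\mathcal M^\circ_n|$. Rectangular reduction: for a coloring of the $1\times 2k$ Möbius strip, $\mathrm{red}$ gives the coloring of the $2\times k$ grid whose column $j$ ($1\le j\le k$) has top square colored as square $j$ and bottom square colored as square $2k+1-j$. *)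

From mathcomp Require Import all_boot.
Set Implicit Arguments. Unset Strict Implicit. Unset Printing Implicit Defensive.

(* Colorings: true = water, false = land. *)

Definition connected_in (T : finType) (e : rel T) (A : {set T}) : bool :=
  [forall x in A, forall y in A,
     connect [rel u v | [&& u \in A, v \in A & e u v]] x y].

Definition water (T : finType) (f : {ffun T -> bool}) : {set T} := [set x | f x].

(* Square j (1-based, [j-1,j]x[0,1]) is represented by s : 'I_n with val s = j-1,
   so square s occupies [s, s+1] x [0,1]. *)

(* Edge adjacency: distinct squares sharing an edge after identification.
   - the vertical edge {s+1} x [0,1] is shared by squares s and s+1;
   - the top edge [s,s+1] x {1} of square s is identified, via
     (x,1) ~ (n-x,0), with [n-s-1, n-s] x {0}, the bottom edge of square
     n-1-s; i.e. squares s, t with s + t = n - 1.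
   (The vertical sides x = 0, x = n form the boundary.) *)
Definition mob_adj (n : nat) : rel 'I_n :=
  fun s t => (s != t) && [|| s.+1 == t, t.+1 == s | (s + t == n.-1)].

(* Vertices of the tiling: points (j, y) with 0 <= j <= n, y in {0,1}
   (y = true means height 1), modulo (j,1) ~ (n-j,0). *)
Definition mob_pt_equiv (n : nat) (p q : 'I_n.+1 * bool) : bool :=
  (p == q) || ((p.1 + q.1 == n) && (p.2 != q.2)).

Definition sq_corner (n : nat) (s : 'I_n) (p : 'I_n.+1 * bool) : bool :=
  (val p.1 == val s) || (val p.1 == (val s).+1).

Definition mob_incident (n : nat) (s : 'I_n) (p : 'I_n.+1 * bool) : bool :=
  [exists q, mob_pt_equiv q p && sq_corner s q].

Definition mob_interior (n : nat) (p : 'I_n.+1 * bool) : bool :=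
  [forall q, mob_pt_equiv q p ==> (0 < val q.1 < n)].

Definition mob_N1 (n : nat) (f : {ffun 'I_n -> bool}) : bool :=
  connected_in (@mob_adj n) (water f).

Definition mob_N2o (n : nat) (f : {ffun 'I_n -> bool}) : bool :=
  [forall p, mob_interior p ==> ~~ [forall s, mob_incident s p ==> f s]].

Definition Mo (n : nat) : {set {ffun 'I_n -> bool}} :=
  [set f | mob_N1 f && mob_N2o f].

(* square (c, r): column c : 'I_k (0-based, column c+1 of the paper),
   row r : bool with true = top, false = bottom. *)
Definition grid_adj (k : nat) : rel ('I_k * bool) :=
  fun p q => ((p.1 == q.1) && (p.2 != q.2))
          || ((p.2 == q.2) && (((val p.1).+1 == val q.1) || ((val q.1).+1 == val p.1))).

Definition no_water_block (k : nat) (f : {ffun 'I_k * bool -> bool}) : bool :=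
  [forall c1 : 'I_k, forall c2 : 'I_k, ((val c1).+1 == val c2) ==>
     ~~ [&& f (c1, true), f (c1, false), f (c2, true) & f (c2, false)]].

Definition nurikabe_rect (k : nat) (f : {ffun 'I_k * bool -> bool}) : bool :=
  connected_in (@grid_adj k) (water f) && no_water_block f.

Definition Nrect (k : nat) : {set {ffun 'I_k * bool -> bool}} :=
  [set f | nurikabe_rect f].

Definition col_water (k : nat) (f : {ffun 'I_k * bool -> bool}) (c : 'I_k) : nat :=
  f (c, true) + f (c, false).

Definition Nrect_i (k i : nat) : {set {ffun 'I_k * bool -> bool}} :=
  [set f in Nrect k | [forall c : 'I_k, (val c == k.-1) ==> (col_water f c == i)]].

Definition at_nat (n : nat) (g : {ffun 'I_n -> bool}) (i : nat) : bool :=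
  if @insub nat (fun m => m < n) _ i is Some o then g o else false.

(* column c (0-based): top = square c+1, bottom = square 2k+1-(c+1) (1-based),
   i.e. 0-based indices c and 2k-1-c. *)
Definition red (k : nat) (g : {ffun 'I_(k.*2) -> bool}) : {ffun 'I_k * bool -> bool} :=
  [ffun p : 'I_k * bool =>
     at_nat g (if p.2 then val p.1 else k.*2 - 1 - val p.1)].

From mathcomp Require Import all_boot.
From mathcomp Require Import zify.

Set Implicit Arguments. Unset Strict Implicit. Unset Printing Implicit Defensive.

(* Reduction is induced by a bijection between the squares of the strip and
   the cells of the 2 x k grid which carries the strip adjacency exactly onto
   the grid adjacency, so (N1) for g is connectivity of the water of red g.
   The interior vertex j (0 < j < 2k) of the strip is incident to the squares
   j-1, j, 2k-j-1, 2k-j; for j <> k these form the 2 x 2 block of columns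
   min(j, 2k-j) and min(j, 2k-j)+1, while for j = k they form the last column.
   Hence (N2 interior) says: no 2 x 2 water block, and the last column is not
   all water. *)

Lemma at_natE n (g : {ffun 'I_n -> bool}) (s : 'I_n) : at_nat g s = g s.
Proof.
rewrite /at_nat; case: insubP => [o _ ho|]; last by rewrite ltn_ord.
by congr (g _); apply: val_inj.
Qed.

Lemma connected_in_bij (T U : finType) (e : rel T) (e' : rel U) (h : T -> U)
    (h' : U -> T) (hK : cancel h h') (h'K : cancel h' h)
    (he : forall x y, e' (h x) (h y) = e x y) (f : {ffun U -> bool}) :
  connected_in e' (water f) = connected_in e (water [ffun x => f (h x)]).
Proof.
set A := water [ffun x => f (h x)].
have inA x : (x \in A) = (h x \in water f) by rewrite !inE ffunE.
set R' := [rel u v | [&& u \in water f, v \in water f & e' u v]].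
set R := [rel u v | [&& u \in A, v \in A & e u v]].
have connectE x y : connect R' (h x) (h y) = connect R x y.
  apply/connectP/connectP => -[p pp ey].
    exists (map h' p); last by rewrite -(hK y) ey -[in RHS](hK x) last_map.
    by rewrite -{1}(hK x); apply: homo_path pp => u v; rewrite /= !inA -he !h'K.
  exists (map h p); last by rewrite ey last_map.
  by apply: homo_path pp => u v; rewrite /= !inA he.
apply/forall_inP/forall_inP => H x.
  by rewrite inA => hx; apply/forall_inP => y; rewrite inA -connectE => hy;
    move/forall_inP: (H _ hx); apply.
rewrite -(h'K x) -inA => hx; apply/forall_inP => y.
by rewrite -(h'K y) -inA connectE => hy; move/forall_inP: (H _ hx); apply.
Qed.

Section MobiusVertices.
Variable n : nat.

Lemma mob_pt_equivE (p q : 'I_n.+1 * bool) :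
  mob_pt_equiv q p = (q == p) || ((val q.1 == n - p.1) && (q.2 == ~~ p.2)).
Proof.
case: p q => [j y] [i x]; rewrite /mob_pt_equiv /=; congr orb.
have := ltn_ord j; have := ltn_ord i; case: x; case: y => /=; lia.
Qed.

Lemma mob_interiorE (p : 'I_n.+1 * bool) : mob_interior p = (0 < p.1 < n).
Proof.
apply/forallP/idP => [/(_ p)|jn q]; first by rewrite /mob_pt_equiv eqxx.
rewrite mob_pt_equivE; apply/implyP => /orP[/eqP-> //|/andP[/eqP-> _]]; lia.
Qed.

Lemma mob_incidentE (s : 'I_n) (p : 'I_n.+1 * bool) :
  mob_incident s p =
    [|| val s == p.1, (val s).+1 == p.1, val s == n - p.1 | (val s).+1 == n - p.1].
Proof.
case: p s => [[j hj] y] [i hi] /=; have hj' : n - j < n.+1 by lia.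
apply/existsP/idP => [[q /andP[]]|].
  rewrite mob_pt_equivE /sq_corner.
  by case/orP=> [/eqP->|/andP[/eqP-> _]] /= /orP[] /eqP; lia.
rewrite orbA => /orP[hs|hs].
  by exists (Ordinal hj, y); rewrite /mob_pt_equiv eqxx /sq_corner /= !(eq_sym j).
exists (Ordinal hj', ~~ y); rewrite mob_pt_equivE /= !eqxx orbT.
by rewrite /sq_corner /= !(eq_sym (n - j)).
Qed.

End MobiusVertices.

Definition vertex_water (G : nat -> bool) (n j : nat) : bool :=
  [&& G j.-1, G j, G (n - j).-1 & G (n - j)].

Lemma forall_incident_water n (g : {ffun 'I_n -> bool}) (p : 'I_n.+1 * bool) :
  0 < p.1 < n ->
  [forall s, mob_incident s p ==> g s] = vertex_water (at_nat g) n p.1.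
Proof.
case: p => [[j hj] y] /= jn; apply/forallP/and4P => [H|[w1 w2 w3 w4] s].
  have water_at i : i < n ->
      [|| i == j.-1, i == j, i == (n - j).-1 | i == n - j] -> at_nat g i.
    move=> hi hinc; rewrite -[i]/(val (Ordinal hi)) at_natE.
    by apply: (implyP (H _)); rewrite mob_incidentE /=; lia.
  by split; apply: water_at; rewrite ?eqxx ?orbT //; lia.
rewrite mob_incidentE -at_natE; apply/implyP; case: s => i hi /= hs.
have : i \in [:: j.-1; j; (n - j).-1; n - j] by rewrite !inE; lia.
by rewrite !inE => /or4P[] /eqP->.
Qed.

Lemma mob_N2oP n (g : {ffun 'I_n -> bool}) :
  reflect (forall j, 0 < j < n -> ~~ vertex_water (at_nat g) n j) (mob_N2o g).
Proof.
apply: (iffP forallP) => [H j hj|H p].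
  have hj' : j < n.+1 by lia.
  by move: (H (Ordinal hj', true)); rewrite mob_interiorE hj forall_incident_water.
apply/implyP; rewrite mob_interiorE => hp.
by rewrite forall_incident_water //; apply: H.
Qed.

Lemma vertex_water_blocks (G : nat -> bool) k : 0 < k ->
  (forall j, 0 < j < k.*2 -> ~~ vertex_water G k.*2 j) <->
  (forall c, c.+1 < k -> ~~ [&& G c, G (k.*2 - 1 - c), G c.+1 & G (k.*2 - 1 - c.+1)])
  /\ ~~ (G k.-1 && G k).
Proof.
move=> k0.
have vertex_block c : c.+1 < k -> vertex_water G k.*2 c.+1 =
    [&& G c, G (k.*2 - 1 - c), G c.+1 & G (k.*2 - 1 - c.+1)].
  move=> ck; rewrite /vertex_water /=.
  have -> : (k.*2 - c.+1).-1 = k.*2 - 1 - c.+1 by lia.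
  have -> : k.*2 - c.+1 = k.*2 - 1 - c by lia.
  by case: (G _); case: (G _); case: (G _); case: (G _).
have vertex_sym j : 0 < j < k.*2 ->
    vertex_water G k.*2 (k.*2 - j) = vertex_water G k.*2 j.
  move=> hj; rewrite /vertex_water; have -> : k.*2 - (k.*2 - j) = j by lia.
  by case: (G _); case: (G _); case: (G _); case: (G _).
have vertex_mid : vertex_water G k.*2 k = G k.-1 && G k.
  rewrite /vertex_water; have -> : k.*2 - k = k by lia.
  by case: (G _); case: (G _).
split=> [H|[H1 H2] j hj].
  split=> [c ck|]; last by rewrite -vertex_mid; apply: H; lia.
  by rewrite -vertex_block //; apply: H; lia.
have [jk|kj|->] := ltngtP j k; last by rewrite vertex_mid.
  have -> : j = j.-1.+1 by lia.
  by rewrite vertex_block; [apply: H1|]; lia.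
rewrite -vertex_sym //; have -> : k.*2 - j = (k.*2 - j).-1.+1 by lia.
by rewrite vertex_block; [apply: H1|]; lia.
Qed.

Section Reduction.
Variable k : nat.

Lemma cell_sq_proof (p : 'I_k * bool) :
  (if p.2 then val p.1 else k.*2 - 1 - val p.1) < k.*2.
Proof. case: p => [c b]; have := ltn_ord c; case: b => /=; lia. Qed.

Definition cell_sq (p : 'I_k * bool) : 'I_(k.*2) := Ordinal (cell_sq_proof p).

Lemma sq_cell_proof (s : 'I_(k.*2)) :
  (if val s < k then val s else k.*2 - 1 - val s) < k.
Proof. have := ltn_ord s; case: ifP; lia. Qed.

Definition sq_cell (s : 'I_(k.*2)) : 'I_k * bool := (Ordinal (sq_cell_proof s), val s < k).

Lemma cell_sqK : cancel cell_sq sq_cell.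
Proof.
case=> [[c hc] b]; rewrite /sq_cell /cell_sq /=.
by congr pair; [apply: val_inj; case: b => /=; case: ifP|case: b => /=]; lia.
Qed.

Lemma sq_cellK : cancel sq_cell cell_sq.
Proof.
move=> [s hs]; apply: val_inj; rewrite /sq_cell /cell_sq /=.
by case: ltnP => /= _; lia.
Qed.

Lemma mob_adj_cell p q : mob_adj (cell_sq p) (cell_sq q) = grid_adj p q.
Proof.
case: p q => [[c hc] b] [[d hd] b'].
rewrite /mob_adj /grid_adj /= -val_eqE /= -(val_eqE (Ordinal hc)) /=.
by case: b; case: b' => /=; lia.
Qed.

Lemma redE (g : {ffun 'I_(k.*2) -> bool}) p : red g p = g (cell_sq p).
Proof. by rewrite ffunE; exact: (at_natE g (cell_sq p)). Qed.

Definition unred (f : {ffun 'I_k * bool -> bool}) : {ffun 'I_(k.*2) -> bool} :=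
  [ffun s => f (sq_cell s)].

Lemma redK : cancel (@red k) unred.
Proof. by move=> g; apply/ffunP => s; rewrite ffunE redE sq_cellK. Qed.

Lemma unredK : cancel unred (@red k).
Proof. by move=> f; apply/ffunP => p; rewrite redE ffunE cell_sqK. Qed.

Lemma red_inj : injective (@red k).
Proof. exact: can_inj redK. Qed.

Lemma mob_N1_red (g : {ffun 'I_(k.*2) -> bool}) :
  mob_N1 g = connected_in (@grid_adj k) (water (red g)).
Proof.
rewrite /mob_N1 (connected_in_bij cell_sqK sq_cellK mob_adj_cell g).
by congr (connected_in _ (water _)); apply/ffunP => p; rewrite redE ffunE.
Qed.

Lemma no_water_block_redP (g : {ffun 'I_(k.*2) -> bool}) :
  reflect (forall c, c.+1 < k -> ~~ [&& at_nat g c, at_nat g (k.*2 - 1 - c),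
                                       at_nat g c.+1 & at_nat g (k.*2 - 1 - c.+1)])
          (no_water_block (red g)).
Proof.
apply: (iffP forallP) => [H c ck|H c1].
  have ck' : c < k by lia.
  by move/forallP: (H (Ordinal ck')) => /(_ (Ordinal ck)) /implyP /(_ (eqxx _));
    rewrite !ffunE.
apply/forallP => c2; apply/implyP => /eqP e.
by rewrite !ffunE /= -e; apply: H; rewrite e ltn_ord.
Qed.

End Reduction.

Lemma col_water_le2 k (f : {ffun 'I_k * bool -> bool}) c : col_water f c <= 2.
Proof. by rewrite /col_water; case: (f _); case: (f _). Qed.

Section LastColumn.
Variables (k : nat) (k0 : 0 < k).

Definition last_col : 'I_k := Ordinal (etrans (ltn_predL k) k0).

Lemma in_Nrect_i f i :
  (f \in Nrect_i k i) = (f \in Nrect k) && (col_water f last_col == i).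
Proof.
rewrite inE; congr andb; apply/forall_inP/idP => [H|H c /eqP cE].
  exact: H.
by have -> : c = last_col by apply: val_inj.
Qed.

Lemma Mo_red g : (g \in Mo k.*2) = (red g \in Nrect_i k 0 :|: Nrect_i k 1).
Proof.
rewrite in_setU !in_Nrect_i !inE /nurikabe_rect mob_N1_red.
have -> : col_water (red g) last_col = at_nat g k.-1 + at_nat g k.
  by rewrite /col_water !ffunE /=; congr (_ + at_nat g _); lia.
have -> : mob_N2o g = no_water_block (red g) && ~~ (at_nat g k.-1 && at_nat g k).
  apply/mob_N2oP/andP => [/(vertex_water_blocks _ k0)[/no_water_block_redP]|]//.
  by case=> /no_water_block_redP H1 H2; apply/(vertex_water_blocks _ k0).
by case: (connected_in _ _); case: (no_water_block _); do 2 case: (at_nat g _).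
Qed.

Lemma red_Mo : @red k @: Mo k.*2 = Nrect_i k 0 :|: Nrect_i k 1.
Proof.
apply/setP => f; apply/imsetP/idP => [[g hg ->]|hf]; first by rewrite -Mo_red.
by exists (unred f); rewrite ?Mo_red unredK.
Qed.

Lemma Nrect_i01 : Nrect_i k 0 :|: Nrect_i k 1 = Nrect k :\: Nrect_i k 2.
Proof.
apply/setP => f; rewrite in_setU in_setD !in_Nrect_i.
by case: (f \in Nrect k); have := col_water_le2 f last_col; case: col_water => [|[|[|]]].
Qed.

Lemma disjoint_Nrect_i i j : i != j -> [disjoint Nrect_i k i & Nrect_i k j].
Proof.
move=> ij; rewrite -setI_eq0; apply/eqP/setP => f; rewrite in_setI !in_Nrect_i in_set0.
by apply/negbTE; apply: contra ij => /andP[/andP[_ /eqP<-] /andP[_ /eqP<-]].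
Qed.

End LastColumn.

Theorem lemma5p1 (k : nat) (hk : 1 <= k) :
  [/\ {in Mo k.*2, forall g, red g \in Nrect_i k 0 :|: Nrect_i k 1},
      {in Mo k.*2 &, injective (@red k)},
      (forall f, f \in Nrect_i k 0 :|: Nrect_i k 1 ->
         exists2 g, g \in Mo k.*2 & red g = f),
      #|Mo k.*2| = #|Nrect_i k 0| + #|Nrect_i k 1|
    & #|Mo k.*2| = #|Nrect k| - #|Nrect_i k 2|].
Proof.
have card_Mo : #|Mo k.*2| = #|Nrect_i k 0 :|: Nrect_i k 1|.
  by rewrite -(red_Mo hk) card_imset //; apply: red_inj.
split.
- by move=> g; rewrite (Mo_red hk).
- by move=> g1 g2 _ _; apply: red_inj.
- by move=> f; rewrite -(red_Mo hk) => /imsetP[g hg ->]; exists g.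
- by rewrite card_Mo; apply/eqP; rewrite (leq_card_setU _ _).2 disjoint_Nrect_i.
- rewrite card_Mo (Nrect_i01 hk) cardsDS //.
  by apply/subsetP => f; rewrite in_Nrect_i // => /andP[].
Qed.
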